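(* Let $\mathcal{H}$ be a real $m^{\rm th}$-order $n$-dimensional strong Hankel tensor ($m\ge2$, $m(n-1)$ even). Then $\mathcal{H}$ has no negative H-eigenvalues.
   Context: The Hankel tensor generated by ${\bf h}=(h_0,\dots,h_{m(n-1)})\in\mathbb{R}^{m(n-1)+1}$ has entries $\mathcal{H}_{i_1\dots i_m}=h_{i_1+\dots+i_m}$, $0\le i_j\le n-1$; its associated Hankel matrix is $H$ with $H_{ij}=h_{i+j}$, $0\le i,j\le m(n-1)/2$; $\mathcal{H}$ is a strong Hankel tensor if $H$ is positive semi-definite. A real $\lambda$ is an H-eigenvalue of $\mathcal{H}$ if there is nonzero ${\bf x}\in\mathbb{R}^n$ with $\mathcal{H}{\bf x}^{m-1}=\lambda{\bf x}^{[m-1]}$, where $(\mathcal{H}{\bf x}^{m-1})_i=\sum_{i_2,\dots,i_m}\mathcal{H}_{i i_2\dots i_m}x_{i_2}\cdots x_{i_m}$ and ${\bf x}^{[m-1]}=(x_1^{m-1},\dots,x_n^{m-1})^\top$. *)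

From HB Require Import structures.
From mathcomp Require Import all_boot all_order all_algebra.
From mathcomp Require Import reals.
Unset Printing Implicit Defensive.
Import Order.TTheory GRing.Theory Num.Theory.
Local Open Scope ring_scope.

(* The generating vector h = (h_0, ..., h_{m(n-1)}) is given as a function
   nat -> R; only the values h_0 .. h_{m(n-1)} are ever used. *)

Definition hankel_dim (m n : nat) : nat := ((m * (n - 1))./2).+1.

Definition hankel_mx (R : pzRingType) (m n : nat) (h : nat -> R)
  : 'M[R]_(hankel_dim m n) :=
  \matrix_(i, j) h (i + j)%N.

Definition psd (R : numDomainType) (k : nat) (A : 'M[R]_k) : Prop :=
  forall v : 'cV[R]_k, 0 <= (v^T *m A *m v) 0 0.

Definition strong_hankel (R : numDomainType) (m n : nat) (h : nat -> R) : Prop :=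
  psd R (hankel_dim m n) (hankel_mx R m n h).

Definition hankel_Hx (R : pzRingType) (m n : nat) (h : nat -> R)
  (x : 'I_n -> R) (i : 'I_n) : R :=
  \sum_(t : {ffun 'I_(m - 1) -> 'I_n})
     h (i + \sum_(j < m - 1) (t j : nat))%N * \prod_(j < m - 1) x (t j).

Definition H_eigenvalue (R : pzRingType) (m n : nat) (h : nat -> R) (lam : R) : Prop :=
  exists x : 'I_n -> R, (exists i, x i != 0) /\
    forall i, hankel_Hx R m n h x i = lam * x i ^+ (m - 1).

From HB Require Import structures.
From mathcomp Require Import all_boot all_order all_algebra.
From mathcomp Require Import reals.
From mathcomp Require Import zify.
Import Order.TTheory GRing.Theory Num.Theory.
Local Open Scope ring_scope.

(* Identify x with the polynomial P = sum_i x_i X^i and let L be the linear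
   form q |-> sum_s h_s q_s.  Then (H x^{m-1})_i = L(X^i P^{m-1}), so an
   eigenpair gives lam * sum_i Z_i x_i^{m-1} = L(Z P^{m-1}) for every Z of
   degree < n, while positive semi-definiteness of the Hankel matrix says
   exactly that L(w^2) >= 0 for deg w <= m(n-1)/2.  For even m take Z = P,
   so that Z P^{m-1} = (P^{m/2})^2 and sum_i Z_i x_i^{m-1} = sum_i x_i^m > 0.
   For odd m write i0 = j + k with j, k <= (n-1)/2 for some x_i0 <> 0 and
   take Z = (X^j + X^k)^2, so that Z P^{m-1} = ((X^j + X^k) P^{(m-1)/2})^2
   and the weights Z_i are nonnegative with Z_i0 > 0. *)

Lemma polyE_size_leq (R : nzSemiRingType) (p : {poly R}) N :
  (size p <= N)%N -> p = \sum_(i < N) p`_i *: 'X^i.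
Proof.
move=> sp; rewrite -poly_def; apply/polyP => k; rewrite coef_poly.
by case: ltnP => // /(leq_trans sp) /leq_sizeP ->.
Qed.
Arguments polyE_size_leq {R p N}.

Section HankelForm.
Variables (R : comNzRingType) (h : nat -> R) (D : nat).

Definition hankel_form (q : {poly R}) : R := \sum_(s < D) h s * q`_s.

Lemma hankel_form_sum (I : finType) (F : I -> {poly R}) :
  hankel_form (\sum_i F i) = \sum_i hankel_form (F i).
Proof.
rewrite /hankel_form exchange_big /=; apply: eq_bigr => s _.
by rewrite coef_sum mulr_sumr.
Qed.

Lemma hankel_formZ c q : hankel_form (c *: q) = c * hankel_form q.
Proof.
by rewrite /hankel_form mulr_sumr; apply: eq_bigr => s _; rewrite coefZ mulrCA.
Qed.

Lemma hankel_formXn k : (k < D)%N -> hankel_form 'X^k = h k.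
Proof.
move=> kD; rewrite /hankel_form (bigD1 (Ordinal kD)) //= coefXn eqxx mulr1.
rewrite big1 ?addr0 // => s /eqP neq_sk; rewrite coefXn.
by case: eqP => [eq_sk|]; [case: neq_sk; apply: val_inj | rewrite mulr0].
Qed.

End HankelForm.

Arguments hankel_form {R} h D q.

Section PolyOfVec.
Context {R : comNzRingType} {n : nat}.

Definition poly_of_vec (x : 'I_n -> R) : {poly R} := \sum_(i < n) x i *: 'X^i.

Lemma size_poly_of_vec x : (size (poly_of_vec x) <= n)%N.
Proof.
rewrite /poly_of_vec; elim/big_ind: _ => [|p q sp sq|i _].
- by rewrite size_poly0.
- by apply: leq_trans (size_polyD _ _) _; rewrite geq_max sp sq.
- by apply: leq_trans (size_scale_leq _ _) _; rewrite size_polyXn.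
Qed.

Lemma size_poly_of_vec_pred x : (size (poly_of_vec x) <= (n - 1).+1)%N.
Proof. by apply: leq_trans (size_poly_of_vec x) _; lia. Qed.

Lemma coef_poly_of_vec x (i : 'I_n) : (poly_of_vec x)`_i = x i.
Proof.
rewrite /poly_of_vec coef_sum (bigD1 i) //= coefZ coefXn eqxx mulr1.
rewrite big1 ?addr0 // => j neq_ji; rewrite coefZ coefXn.
by case: eqP => [/val_inj eq_ji|]; [rewrite eq_ji eqxx in neq_ji|rewrite mulr0].
Qed.

Lemma poly_of_vec_exp x k :
  poly_of_vec x ^+ k =
  \sum_(t : {ffun 'I_k -> 'I_n})
     (\prod_(j < k) x (t j)) *: 'X^(\sum_(j < k) (t j : nat)).
Proof.
rewrite -{1}(card_ord k) -prodr_const bigA_distr_bigA /=.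
apply: eq_bigr => t _; rewrite scaler_prod; congr (_ *: _).
by rewrite (big_morph (fun s => 'X^s) (exprD 'X) (expr0 _)).
Qed.

End PolyOfVec.

Section HankelEigen.
Context {R : comNzRingType} {m n : nat} {h : nat -> R}.
Hypothesis m_gt0 : (0 < m)%N.

Local Notation L := (hankel_form h (m * (n - 1)).+1).

Lemma hankel_Hx_form x (i : 'I_n) :
  hankel_Hx R m n h x i = L ('X^i * poly_of_vec x ^+ (m - 1)).
Proof.
rewrite poly_of_vec_exp mulr_sumr hankel_form_sum.
apply: eq_bigr => t _; rewrite -scalerAr -exprD hankel_formZ hankel_formXn.
  by rewrite mulrC.
have -> : (m * (n - 1) = (n - 1) + (m - 1) * (n - 1))%N.
  by case: (m) m_gt0 => // m' _; rewrite subSS subn0 mulSn.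
rewrite ltnS; apply: leq_add.
  by have := ltn_ord i; lia.
apply: leq_trans (_ : _ <= \sum_(j < m - 1) (n - 1))%N _.
  by apply: leq_sum => j _; have := ltn_ord (t j); move: (t j : nat) => tj; lia.
by rewrite sum_nat_const card_ord.
Qed.

Lemma hankel_Hx_weighted x (Z : {poly R}) : (size Z <= n)%N ->
  \sum_(i < n) Z`_i * hankel_Hx R m n h x i = L (Z * poly_of_vec x ^+ (m - 1)).
Proof.
move=> sZ; rewrite {2}(polyE_size_leq sZ) mulr_suml hankel_form_sum.
by apply: eq_bigr => i _; rewrite -scalerAl hankel_formZ hankel_Hx_form.
Qed.

Lemma H_eigen_form lam x (Z : {poly R}) :
  (forall i, hankel_Hx R m n h x i = lam * x i ^+ (m - 1)) -> (size Z <= n)%N ->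
  lam * \sum_(i < n) Z`_i * x i ^+ (m - 1) = L (Z * poly_of_vec x ^+ (m - 1)).
Proof.
move=> Heig sZ; rewrite -hankel_Hx_weighted // mulr_sumr.
by apply: eq_bigr => i _; rewrite Heig mulrCA.
Qed.

End HankelEigen.

Arguments H_eigen_form {R m n h} m_gt0 {lam x Z}.

Lemma strong_hankel_form_sqr_ge0 (R : numDomainType) m n (h : nat -> R)
    (w : {poly R}) :
  strong_hankel R m n h -> (size w <= hankel_dim m n)%N ->
  0 <= hankel_form h (m * (n - 1)).+1 (w * w).
Proof.
move=> Hpsd sw; have := Hpsd (\col_i w`_i); congr (_ <= _).
rewrite [in RHS](polyE_size_leq sw) mulr_suml hankel_form_sum !mxE.
under eq_bigr => b _ do rewrite !mxE mulr_suml.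
rewrite exchange_big /=; apply: eq_bigr => a _.
rewrite mulr_sumr hankel_form_sum; apply: eq_bigr => b _.
rewrite !mxE -scalerAl -scalerAr scalerA -exprD hankel_formZ hankel_formXn.
  by rewrite mulrAC.
by have := ltn_ord a; have := ltn_ord b; rewrite /hankel_dim; lia.
Qed.

Lemma psumr_gt0 (R : numDomainType) (I : finType) (F : I -> R) i0 :
  (forall i, 0 <= F i) -> 0 < F i0 -> 0 < \sum_i F i.
Proof.
move=> F_ge0 Fi0_gt0; rewrite (bigD1 i0) //=.
by apply: (lt_le_trans Fi0_gt0); rewrite lerDl sumr_ge0.
Qed.
Arguments psumr_gt0 {R I F}.

Lemma size_exp_leq (R : idomainType) (p : {poly R}) k N :
  (size p <= N.+1)%N -> (size (p ^+ k) <= (N * k).+1)%N.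
Proof.
move=> sp; apply: leq_trans (leqSpred _) _.
by rewrite size_exp ltnS leq_mul2r; apply/orP; right; lia.
Qed.
Arguments size_exp_leq {R p} k {N}.

Lemma size_mul_leq_add (R : nzSemiRingType) (p q : {poly R}) a b :
  (size p <= a.+1)%N -> (size q <= b.+1)%N -> (size (p * q)%R <= (a + b).+1)%N.
Proof. by move=> sp sq; apply: leq_trans (size_polyMleq _ _) _; lia. Qed.
Arguments size_mul_leq_add {R p q a b}.

Section EigenvalueNonneg.
Context {R : realDomainType} {m n : nat} {h : nat -> R}.
Context {lam : R} {x : 'I_n -> R} {i0 : 'I_n}.
Hypotheses (m_gt0 : (0 < m)%N) (Hs : strong_hankel R m n h) (x_i0 : x i0 != 0).
Hypothesis Heig : forall i, hankel_Hx R m n h x i = lam * x i ^+ (m - 1).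

Lemma H_eigenvalue_ge0_of_sqr (Z w : {poly R}) :
  (size Z <= n)%N -> (size w <= hankel_dim m n)%N ->
  Z * poly_of_vec x ^+ (m - 1) = w * w ->
  0 < \sum_(i < n) Z`_i * x i ^+ (m - 1) -> 0 <= lam.
Proof.
move=> sZ sw eZw S_gt0.
rewrite -(pmulr_lge0 _ S_gt0) (H_eigen_form m_gt0 Heig sZ) eZw.
exact: strong_hankel_form_sqr_ge0.
Qed.

Lemma H_eigenvalue_ge0_even : ~~ odd m -> 0 <= lam.
Proof.
move=> m_even; set a := m./2.
have m_eq : m = (a * 2)%N.
  by rewrite /a -{1}(odd_double_half m) (negbTE m_even); lia.
apply: (H_eigenvalue_ge0_of_sqr _ (poly_of_vec x ^+ a) (size_poly_of_vec x)).
- apply: leq_trans (size_exp_leq a (size_poly_of_vec_pred x)) _.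
  by rewrite /hankel_dim m_eq; lia.
- by rewrite -exprS -exprD; congr (_ ^+ _); lia.
apply: (psumr_gt0 i0) => [i|].
all: rewrite coef_poly_of_vec -exprS subn1 prednK // m_eq.
  by rewrite exprn_even_ge0 // oddM andbF.
by rewrite exprn_even_gt0 ?x_i0 ?orbT // oddM andbF.
Qed.

Lemma H_eigenvalue_ge0_odd : odd m -> ~~ odd (m * (n - 1)) -> 0 <= lam.
Proof.
move=> m_odd mn_even; set a := m./2; set r := (n - 1)./2.
have n1_even : ~~ odd (n - 1) by move: mn_even; rewrite oddM m_odd.
have m_eq : m = (a * 2).+1 by rewrite /a -{1}(odd_double_half m) m_odd; lia.
have n1_eq : (n - 1 = r * 2)%N.
  by rewrite /r -{1}(odd_double_half (n - 1)) (negbTE n1_even); lia.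
have i0_lt := ltn_ord i0.
set j := (i0 : nat)./2; set k := (i0 - j)%N.
have jk_eq : (j + k)%N = i0 by rewrite /k /j; lia.
set v : {poly R} := 'X^j + 'X^k.
have sv : (size v <= r.+1)%N.
  by apply: leq_trans (size_polyD _ _) _; rewrite geq_max !size_polyXn; lia.
have coef_v2 i : (v ^+ 2)`_i =
    ((i == j * 2) + (i == j + k) * 2 + (i == k * 2))%N%:R.
  by rewrite sqrrD -!exprM -exprD !coefD !coefXn !natrD natrM mulr_natr mulr2n.
apply: (H_eigenvalue_ge0_of_sqr (v ^+ 2) (v * poly_of_vec x ^+ a)).
- by apply: leq_trans (size_exp_leq 2 sv) _; lia.
- have sPa := size_exp_leq a (size_poly_of_vec_pred x).
  apply: leq_trans (size_mul_leq_add sv sPa) _.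
  rewrite /hankel_dim; have -> : (m * (n - 1))./2 = ((n - 1) * a + r)%N.
    by rewrite m_eq n1_eq mulnA muln2 doubleK; nia.
  by rewrite addnC.
- have -> : (m - 1 = a + a)%N by lia.
  by rewrite exprD mulrACA.
apply: (psumr_gt0 i0) => [i|]; rewrite coef_v2.
  by rewrite mulr_ge0 ?ler0n ?exprn_even_ge0 // subn1 m_eq /= oddM andbF.
rewrite mulr_gt0 ?ltr0n ?exprn_even_gt0 ?x_i0 ?orbT //; first lia.
by rewrite subn1 m_eq /= oddM andbF.
Qed.

End EigenvalueNonneg.

Theorem corollary1 (R : realType) (m n : nat) (h : nat -> R) :
  (2 <= m)%N -> ~~ odd (m * (n - 1)) -> strong_hankel R m n h ->
  forall lam : R, H_eigenvalue R m n h lam -> ~ (lam < 0).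
Proof.
move=> m_ge2 mn_even Hs lam [x [[i0 x_i0] Heig]]; apply/negP; rewrite -leNgt.
have m_gt0 : (0 < m)%N by lia.
case: (boolP (odd m)) => [m_odd | m_even].
- exact: (H_eigenvalue_ge0_odd m_gt0 Hs x_i0 Heig).
- exact: (H_eigenvalue_ge0_even m_gt0 Hs x_i0 Heig).
Qed.
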